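(* Consider the three-level model described in the context, in which the first predator's prey selection is fixed (so that $\tilde X_t$ has a distribution not depending on $t$; call it $\tilde X$), and a second predator consumes first predators; let $\tilde Y$ denote the parasite burden of a first predator given that it has been consumed by the second predator. Then \[ \frac{\mathbb{E}(\tilde{Y}^{2})}{\mathbb{E}(\tilde{Y})} \geq \mathbb{E}(\tilde{Y}) + \frac{\mathbb{E}(\tilde{X}^{2})}{\mathbb{E}(\tilde{X})}. \]
   Context: Model. The parasite burden of a prey aged $t\ge 0$ is $X_t$, where $(X_t)_{t\ge0}$ is a non-decreasing integer-valued stochastic process with $X_0=0$ (all moments used are assumed finite and the relevant expectations positive). Prey ages have probability density $f_A$ on $[0,\infty)$. A (first) predator encounters random prey at the times of a non-homogeneous Poisson process with intensity $\phi$; a predator aged $t$ consumes an encountered prey aged $u$ with probability $p(u,t)$. Consumption times form a Poisson process with intensity $\psi(t)=\phi(t)\int_0^\infty p(u,t)f_A(u)\,du$. The age $\tilde A_t$ of a prey consumed by a predator aged $t$ has density $p(a,t)f_A(a)/\int_0^\infty p(u,t)f_A(u)\,du$, and $\tilde X_t=X_{\tilde A_t}$ ($\tilde A_t$ independent of $X$). Consumed prey transfer all their parasites, with independent contributions; the first predator's burden $Y_t$ at age $t$ ($Y_0=0$) is the sum over consumption times $s\le t$ of independent copies of $\tilde X_s$. Fixed prey selection means that for all $s<t$ the ratio $p(u,t)/p(u,s)$ does not depend on $u$, so the law of $\tilde A_t$, hence of $\tilde X_t$, does not depend on $t$. A second predator consumes first predators; the age of a first predator consumed by the second predator has probability density $f_{\tilde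 A}$ (the second predator's prey selection being fixed), and $\tilde Y=Y_{\tilde A}$ where $\tilde A\sim f_{\tilde A}$ is independent of the process $(Y_t)$. *)

From HB Require Import structures.
From mathcomp Require Import all_boot all_order all_algebra.
From mathcomp Require Import all_classical all_reals all_analysis.
Set Implicit Arguments. Unset Strict Implicit. Unset Printing Implicit Defensive.
Import Order.TTheory GRing.Theory Num.Theory.
Import numFieldNormedType.Exports.
Local Open Scope classical_set_scope.
Local Open Scope ring_scope.

Section model.
Variable R : realType.

Definition is_pmf (p : nat -> R) : Prop :=
  (forall k, 0 <= p k) /\ (\sum_(0 <= k <oo) (p k)%:E = 1)%E.

Definition conv (p q : nat -> R) (k : nat) : R :=
  \sum_(i < k.+1) p i * q (k - i)%N.

(* n-fold convolution: law of the sum of n independent copies of a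
   variable with law p (the empty sum is 0) *)
Fixpoint convn (p : nat -> R) (n : nat) : nat -> R :=
  match n with
  | O => fun k => (k == 0%N)%:R
  | S m => conv (convn p m) p
  end.

(* Poisson(lam) weights, valid also for lam = 0 *)
Definition poisw (lam : R) (n : nat) : R :=
  expR (- lam) * lam ^+ n / n`!%:R.

Definition cumint (psi : R -> R) (t : R) : R :=
  fine (\int[lebesgue_measure]_(s in `[0%R, t]) (psi s)%:E)%E.

(* law of the first predator's burden Y_t: the consumption times in [0,t]
   form a Poisson process of intensity psi, so their number is
   Poisson(Lambda(t)); each consumption adds an independent copy of Xtilde
   (law px). *)
Definition lawY (px : nat -> R) (psi : R -> R) (t : R) (k : nat) : \bar R :=
  (\sum_(0 <= n <oo) (poisw (cumint psi t) n * convn px n k)%:E)%E.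

(* law of Ytilde = Y_{Atilde}, Atilde with density fAt independent of Y *)
Definition lawYt (px : nat -> R) (psi fAt : R -> R) (k : nat) : \bar R :=
  (\int[lebesgue_measure]_(a in `[0%R, +oo[) ((fAt a)%:E * lawY px psi a k))%E.

Definition mom1 (p : nat -> \bar R) : \bar R :=
  (\sum_(0 <= k <oo) (k%:R)%:E * p k)%E.
Definition mom2 (p : nat -> \bar R) : \bar R :=
  (\sum_(0 <= k <oo) ((k%:R) ^+ 2)%:E * p k)%E.

End model.

From Pilot Require Import Defs.
From HB Require Import structures.
From mathcomp Require Import all_boot all_order all_algebra.
From mathcomp Require Import all_classical all_reals all_analysis.
From mathcomp Require Import ring lra zify measurable_realfun.
Set Implicit Arguments. Unset Strict Implicit. Unset Printing Implicit Defensive.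
Import Order.TTheory GRing.Theory Num.Theory.
Import numFieldNormedType.Exports.
Local Open Scope classical_set_scope.
Local Open Scope ring_scope.

(* The burden Y_t is compound Poisson: Poisson(L(t)) summands, L(t) = int_0^t psi,
   each an independent copy of Xtilde with moments m1, m2.  Conditioning on the
   number N of summands and using E N = L, E N(N-1) = L^2 gives
   E Y_t = m1 L(t) and E Y_t^2 = m2 L(t) + m1^2 L(t)^2.  Mixing over the age
   Atilde gives E Ytilde = m1 A and E Ytilde^2 = m2 A + m1^2 B with
   A = E L(Atilde), B = E L(Atilde)^2 >= A^2 (Jensen), whence
   E Ytilde^2 / E Ytilde = m2/m1 + m1 B/A >= m2/m1 + m1 A. *)

Section nneseries_lemmas.
Context {R : realType}.
Local Open Scope ereal_scope.
Implicit Types f : nat -> \bar R.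

Lemma nneseries_finite_support f N : (forall k, 0 <= f k) ->
  (forall k, (N <= k)%N -> f k = 0) -> \sum_(k <oo) f k = \sum_(0 <= k < N) f k.
Proof.
move=> f0 fN; rewrite (nneseries_split 0 N) // add0n eseries0 ?adde0 //.
by move=> k Nk _; exact: fN.
Qed.

Lemma nneseries_leq_shift f i : (forall k, 0 <= f k) ->
  \sum_(k <oo) (if (i <= k)%N then f k else 0) = \sum_(j <oo) f (j + i)%N.
Proof.
move=> f0; rewrite nneseries_addn // (nneseries_split 0 i); last by move=> k _; case: ifP.
rewrite add0n big1_seq ?add0e; last first.
  by move=> k /andP[_]; rewrite mem_index_iota => /andP[_ ki]; rewrite leqNgt ki.
apply/congr_lim/funext => n; rewrite big_nat_cond [RHS]big_nat_cond.
by apply: eq_bigr => k /andP[/andP[->]].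
Qed.

Lemma nneseries2D (f g : nat -> nat -> \bar R) :
  (forall i j, 0 <= f i j) -> (forall i j, 0 <= g i j) ->
  \sum_(i <oo) \sum_(j <oo) (f i j + g i j) =
  \sum_(i <oo) \sum_(j <oo) f i j + \sum_(i <oo) \sum_(j <oo) g i j.
Proof.
move=> f0 g0; rewrite -nneseriesD => [|i _ _|i _ _]; try exact: nneseries_ge0.
by apply: eq_eseriesr => i _; rewrite nneseriesD.
Qed.
End nneseries_lemmas.

Section convolution_moments.
Context {R : realType}.
Local Open Scope ereal_scope.

Definition pmom (r : nat) (p : nat -> R) : \bar R :=
  \sum_(k <oo) ((k%:R ^+ r)%R * p k)%:E.
(* the order is read as a nat numeral even under ring_scope *)
Arguments pmom r%_N p.

Lemma nneseries_conv (w p q : nat -> R) :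
  (forall k, (0 <= w k)%R) -> (forall k, (0 <= p k)%R) -> (forall k, (0 <= q k)%R) ->
  \sum_(k <oo) (w k * Defs.conv p q k)%:E =
  \sum_(i <oo) \sum_(j <oo) (w (i + j)%N * p i * q j)%:E.
Proof.
move=> w0 p0 q0.
have t0 k i : 0 <= if (i <= k)%N then (w k * p i * q (k - i)%N)%:E else 0.
  by case: ifP => // _; rewrite lee_fin !mulr_ge0.
transitivity (\sum_(k <oo) \sum_(i <oo)
    if (i <= k)%N then (w k * p i * q (k - i)%N)%:E else 0).
  apply: eq_eseriesr => k _; rewrite (@nneseries_finite_support _ _ k.+1) //; last first.
    by move=> i; rewrite ltnNge => /negbTE ->.
  rewrite /Defs.conv mulr_sumr -sumEFin big_mkord; apply: eq_bigr => i _.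
  by rewrite -ltnS ltn_ord mulrA.
rewrite nneseries_interchange //; apply: eq_eseriesr => i _.
rewrite nneseries_leq_shift => [|k]; last by rewrite lee_fin !mulr_ge0.
by apply: eq_eseriesr => j _; rewrite addnK addnC.
Qed.

Lemma pmom0E (p : nat -> R) : pmom 0 p = \sum_(k <oo) (p k)%:E.
Proof. by apply: eq_eseriesr => k _; rewrite expr0 mul1r. Qed.

Lemma pmom_ge0 r (p : nat -> R) : (forall k, (0 <= p k)%R) -> 0 <= pmom r p.
Proof. by move=> p0; apply: nneseries_ge0 => k _ _; rewrite lee_fin mulr_ge0 ?exprn_ge0. Qed.

Lemma mom1_EFin (p : nat -> R) : mom1 (fun k => (p k)%:E) = pmom 1 p.
Proof. by apply: eq_eseriesr => k _; rewrite -EFinM. Qed.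

Lemma mom2_EFin (p : nat -> R) : mom2 (fun k => (p k)%:E) = pmom 2 p.
Proof. by apply: eq_eseriesr => k _; rewrite -EFinM. Qed.

Lemma nneseries_mul_pmom (a q : nat -> R) (r : nat) (s : R) :
  (forall i, (0 <= a i)%R) -> (forall j, (0 <= q j)%R) -> pmom r q = s%:E ->
  \sum_(i <oo) \sum_(j <oo) (a i * (j%:R ^+ r * q j))%:E = s%:E * \sum_(i <oo) (a i)%:E.
Proof.
move=> a0 q0 qs; rewrite -nneseriesZl => [|i _]; last by rewrite lee_fin.
apply: eq_eseriesr => i _; under eq_eseriesr do rewrite EFinM.
rewrite nneseriesZl => [|j _]; last by rewrite lee_fin mulr_ge0 ?exprn_ge0.
by rewrite -/(pmom r q) qs muleC.
Qed.

Section conv_pmom.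
Variables (q : nat -> R) (m1 m2 : R).
Hypothesis q0 : forall k, (0 <= q k)%R.
Hypothesis q_mass : pmom 0 q = 1.
Hypothesis q_mom1 : pmom 1 q = m1%:E.
Hypothesis q_mom2 : pmom 2 q = m2%:E.
Variable p : nat -> R.
Hypothesis p0 : forall k, (0 <= p k)%R.

Let pow_mul_ge0 r k : (0 <= k%:R ^+ r * p k)%R. Proof. exact: mulr_ge0. Qed.

Lemma conv_pmom0 : pmom 0 (Defs.conv p q) = pmom 0 p.
Proof.
rewrite [LHS]/pmom nneseries_conv //.
transitivity (\sum_(i <oo) \sum_(j <oo) (p i * (j%:R ^+ 0%N * q j))%:E).
  by do 2 apply: eq_eseriesr => ? _; rewrite !expr0 !mul1r.
by rewrite (nneseries_mul_pmom _ _ q_mass) // mul1e pmom0E.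
Qed.

Lemma conv_pmom1 : pmom 1 (Defs.conv p q) = pmom 1 p + m1%:E * pmom 0 p.
Proof.
rewrite [LHS]/pmom nneseries_conv //.
transitivity (\sum_(i <oo) \sum_(j <oo)
    ((i%:R ^+ 1%N * p i * (j%:R ^+ 0%N * q j))%:E + (p i * (j%:R ^+ 1%N * q j))%:E)).
  by do 2 apply: eq_eseriesr => ? _; rewrite -EFinD natrD; congr EFin; ring.
rewrite nneseries2D => [|i j|i j]; rewrite ?lee_fin ?mulr_ge0 //.
rewrite [X in X + _](nneseries_mul_pmom (pow_mul_ge0 1) q0 q_mass) mul1e.
by rewrite [X in _ + X](nneseries_mul_pmom p0 q0 q_mom1) pmom0E.
Qed.

Lemma conv_pmom2 :
  pmom 2 (Defs.conv p q) = pmom 2 p + (2 * m1)%:E * pmom 1 p + m2%:E * pmom 0 p.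
Proof.
rewrite [LHS]/pmom nneseries_conv //.
transitivity (\sum_(i <oo) \sum_(j <oo)
    ((i%:R ^+ 2%N * p i * (j%:R ^+ 0%N * q j))%:E
     + (2 * (i%:R ^+ 1%N * p i) * (j%:R ^+ 1%N * q j))%:E
     + (p i * (j%:R ^+ 2%N * q j))%:E)).
  by do 2 apply: eq_eseriesr => ? _; rewrite -!EFinD natrD; congr EFin; ring.
rewrite !nneseries2D; try by move=> i j; rewrite ?adde_ge0 ?lee_fin ?mulr_ge0.
have two_pow_mul_ge0 i : (0 <= 2 * (i%:R ^+ 1 * p i) :> R)%R by rewrite mulr_ge0.
rewrite [X in X + _ + _](nneseries_mul_pmom (pow_mul_ge0 2) q0 q_mass) mul1e.
rewrite [X in _ + X + _](nneseries_mul_pmom two_pow_mul_ge0 q0 q_mom1).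
rewrite [X in _ + X](nneseries_mul_pmom p0 q0 q_mom2) pmom0E [(2 * m1)%:E]EFinM -muleA.
under [X in _ + _ * X + _]eq_eseriesr do rewrite EFinM.
rewrite nneseriesZl => [|i _]; last by rewrite lee_fin.
by rewrite muleCA.
Qed.
End conv_pmom.
End convolution_moments.

Lemma ffact2S n : (n.+1 ^_ 2 = n ^_ 2 + 2 * n)%N.
Proof. by case: n => [|n] //; rewrite !ffactSS ffactn0 ffactn1; lia. Qed.

Section convn_moments.
Context {R : realType}.
Local Open Scope ereal_scope.
Variables (q : nat -> R) (m1 m2 : R).
Hypothesis q0 : forall k, (0 <= q k)%R.
Hypothesis q_mass : pmom 0 q = 1.
Hypothesis q_mom1 : pmom 1 q = m1%:E.
Hypothesis q_mom2 : pmom 2 q = m2%:E.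

Lemma convn_ge0 n k : (0 <= convn q n k)%R.
Proof.
elim: n k => [|n ih] k /=; first exact: ler0n.
by rewrite /Defs.conv sumr_ge0 // => i _; rewrite mulr_ge0.
Qed.

Lemma pmom_convn0 r : pmom r (convn q 0) = (0 ^+ r)%:E.
Proof.
rewrite /pmom (@nneseries_finite_support _ _ 1) => [|k|[|k] //= _]; last first.
- by rewrite mulr0.
- by rewrite lee_fin mulr_ge0 ?exprn_ge0 ?convn_ge0.
by rewrite big_nat1 /= mulr1.
Qed.

Lemma convn_pmom n :
  [/\ pmom 0 (convn q n) = 1, pmom 1 (convn q n) = (n%:R * m1)%:E &
      pmom 2 (convn q n) = (n%:R * m2 + (n ^_ 2)%:R * m1 ^+ 2)%:E].
Proof.
elim: n => [|n [mass mom1 mom2]].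
  by rewrite !pmom_convn0 !expr0n /= !mul0r addr0.
have p0 := convn_ge0 n.
split => /=.
- by rewrite conv_pmom0.
- rewrite (conv_pmom1 q0 q_mass q_mom1 p0) mass mom1 mule1 -EFinD -natr1.
  by congr EFin; ring.
- rewrite (conv_pmom2 q0 q_mass q_mom1 q_mom2 p0) mass mom1 mom2 mule1.
  by rewrite -!EFinM -!EFinD ffact2S -natr1 natrD natrM; congr EFin; ring.
Qed.
End convn_moments.

Section poisson_moments.
Context {R : realType}.
Local Open Scope ereal_scope.

Lemma poisw_ge0 (L : R) n : (0 <= L)%R -> (0 <= poisw L n)%R.
Proof. by move=> L0; rewrite /poisw !mulr_ge0 ?expR_ge0 ?exprn_ge0 ?invr_ge0. Qed.

Lemma expR_eseries (x : R) : \sum_(n <oo) (x ^+ n / n`!%:R)%:E = (expR x)%:E.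
Proof.
rewrite /expR -EFin_lim; last exact: is_cvg_series_exp_coeff.
by apply/congr_lim/funext => n /=; rewrite /series /= sumEFin.
Qed.

Lemma poisw_ffact_mom (L : R) r : (0 <= L)%R ->
  \sum_(n <oo) ((n ^_ r)%:R * poisw L n)%:E = (L ^+ r)%:E.
Proof.
move=> L0.
have t0 n : 0 <= ((n ^_ r)%:R * poisw L n)%:E by rewrite lee_fin mulr_ge0 ?poisw_ge0.
transitivity (\sum_(n <oo) if (r <= n)%N then ((n ^_ r)%:R * poisw L n)%:E else 0).
  by apply: eq_eseriesr => n _; case: leqP => // /ffact_small ->; rewrite mul0r.
rewrite nneseries_leq_shift; last exact: t0.
transitivity (\sum_(m <oo) (expR (- L) * L ^+ r)%:E * (L ^+ m / m`!%:R)%:E).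
  apply: eq_eseriesr => m _; rewrite -EFinM /poisw; congr EFin.
  rewrite -(ffact_fact (leq_addl m r)) addnK natrM exprD.
  have mfact_neq0 : (m`!%:R : R) != 0%R by rewrite pnatr_eq0 -lt0n fact_gt0.
  have ffact_neq0 : ((m + r) ^_ r)%:R != 0%R :> R by rewrite pnatr_eq0 -lt0n ffact_gt0 leq_addl.
  by field; rewrite mfact_neq0 ffact_neq0.
rewrite nneseriesZl => [|m _]; last by rewrite lee_fin divr_ge0 ?exprn_ge0.
by rewrite expR_eseries -EFinM mulrAC -expRD addNr expR0 mul1r.
Qed.
End poisson_moments.

Section compound_poisson.
Context {R : realType}.
Local Open Scope ereal_scope.

Definition compound_poisson (q : nat -> R) (L : R) (k : nat) : \bar R :=
  \sum_(n <oo) (poisw L n * convn q n k)%:E.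

Variables (q : nat -> R) (m1 m2 : R).
Hypothesis q0 : forall k, (0 <= q k)%R.
Hypothesis q_mass : pmom 0 q = 1.
Hypothesis q_mom1 : pmom 1 q = m1%:E.
Hypothesis q_mom2 : pmom 2 q = m2%:E.
Variable L : R.
Hypothesis L0 : (0 <= L)%R.

Lemma compound_poisson_ge0 k : 0 <= compound_poisson q L k.
Proof. by apply: nneseries_ge0 => n _ _; rewrite lee_fin mulr_ge0 ?poisw_ge0 ?convn_ge0. Qed.

Lemma compound_poisson_pmomE r :
  \sum_(k <oo) ((k%:R ^+ r)%:E * compound_poisson q L k) =
  \sum_(n <oo) (poisw L n)%:E * pmom r (convn q n).
Proof.
have pow_ge0 k : (0 <= k%:R ^+ r :> R)%R by exact/exprn_ge0/ler0n.
transitivity (\sum_(k <oo) \sum_(n <oo) (poisw L n)%:E * (k%:R ^+ r * convn q n k)%:E).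
  apply: eq_eseriesr => k _; rewrite -nneseriesZl => [|n _]; last first.
    by rewrite lee_fin mulr_ge0 ?poisw_ge0 ?convn_ge0.
  by apply: eq_eseriesr => n _; rewrite -!EFinM mulrCA.
rewrite nneseries_interchange => [|k n]; last first.
  by rewrite -EFinM lee_fin mulr_ge0 ?poisw_ge0 ?mulr_ge0 ?convn_ge0.
apply: eq_eseriesr => n _; rewrite nneseriesZl // => k _.
by rewrite lee_fin mulr_ge0 ?convn_ge0.
Qed.

Lemma mom1_compound_poisson : mom1 (compound_poisson q L) = (m1 * L)%:E.
Proof.
transitivity (\sum_(k <oo) ((k%:R ^+ 1)%:E * compound_poisson q L k)).
  by apply: eq_eseriesr => k _; rewrite expr1.
rewrite compound_poisson_pmomE.
transitivity (\sum_(n <oo) m1%:E * ((n ^_ 1)%:R * poisw L n)%:E).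
  apply: eq_eseriesr => n _; have [_ -> _] := convn_pmom q0 q_mass q_mom1 q_mom2 n.
  by rewrite -!EFinM ffactn1; congr EFin; ring.
rewrite nneseriesZl => [|n _]; last by rewrite lee_fin mulr_ge0 ?poisw_ge0.
by rewrite poisw_ffact_mom // -EFinM expr1.
Qed.

Lemma mom2_compound_poisson :
  mom2 (compound_poisson q L) = (m2 * L + m1 ^+ 2 * L ^+ 2)%:E.
Proof.
have m2_ge0 : (0 <= m2)%R by rewrite -lee_fin -q_mom2 pmom_ge0.
have fmom_ge0 r n : 0 <= ((n ^_ r)%:R * poisw L n)%:E.
  by rewrite lee_fin mulr_ge0 ?poisw_ge0.
rewrite /mom2 compound_poisson_pmomE.
transitivity (\sum_(n <oo) (m2%:E * ((n ^_ 1)%:R * poisw L n)%:E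
                          + (m1 ^+ 2)%:E * ((n ^_ 2)%:R * poisw L n)%:E)).
  apply: eq_eseriesr => n _; have [_ _ ->] := convn_pmom q0 q_mass q_mom1 q_mom2 n.
  by rewrite -!EFinM -EFinD ffactn1; congr EFin; ring.
rewrite nneseriesD => [|n _ _|n _ _]; last 2 first.
- by rewrite mule_ge0 ?fmom_ge0 ?lee_fin.
- by rewrite mule_ge0 ?fmom_ge0 ?lee_fin ?sqr_ge0.
by rewrite !nneseriesZl => [|n _|n _]; rewrite ?poisw_ffact_mom.
Qed.
End compound_poisson.

Section density_mixture.
Context d (T : measurableType d) (R : realType) (mu : {measure set T -> \bar R}).
Local Open Scope ereal_scope.
Variables (D : set T) (f : T -> R).
Hypothesis mD : measurable D.
Hypothesis mf : measurable_fun D f.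
Hypothesis f0 : forall x, D x -> (0 <= f x)%R.

Lemma nneseries_mixture (l : T -> nat -> \bar R) (w : nat -> R) :
  (forall x k, D x -> 0 <= l x k) -> (forall k, measurable_fun D (fun x => l x k)) ->
  (forall k, (0 <= w k)%R) ->
  \sum_(k <oo) (w k)%:E * \int[mu]_(x in D) ((f x)%:E * l x k) =
  \int[mu]_(x in D) ((f x)%:E * \sum_(k <oo) (w k)%:E * l x k).
Proof.
move=> l0 ml w0.
have fl0 k x : D x -> 0 <= (f x)%:E * l x k by move=> Dx; rewrite mule_ge0 ?lee_fin ?f0 ?l0.
have mfl k : measurable_fun D (fun x => (f x)%:E * l x k).
  by apply: emeasurable_funM => //; exact/measurable_EFinP.
have wfl0 k x : D x -> 0 <= (w k)%:E * ((f x)%:E * l x k).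
  by move=> Dx; rewrite mule_ge0 ?lee_fin ?fl0.
transitivity (\sum_(k <oo) \int[mu]_(x in D) ((w k)%:E * ((f x)%:E * l x k))).
  by apply: eq_eseriesr => k _; rewrite (ge0_integralZl_EFin _ mD (fl0 k) (mfl k) (w0 k)).
rewrite -(integral_nneseries _ mD (fun k => measurable_funeM _ (mfl k)) wfl0).
apply: eq_integral => x /[!inE] Dx; under eq_eseriesr do rewrite muleCA.
by rewrite nneseriesZl // => k _; rewrite mule_ge0 ?lee_fin ?l0.
Qed.

Lemma sqr_integral_le (g : T -> R) (a : R) :
  measurable_fun D g -> (forall x, D x -> (0 <= g x)%R) ->
  \int[mu]_(x in D) (f x)%:E = 1 ->
  \int[mu]_(x in D) (f x * g x)%:E = a%:E ->
  (a ^+ 2)%:E <= \int[mu]_(x in D) (f x * g x ^+ 2)%:E.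
Proof.
move=> mg g0 f1 fga.
have f_ge0 x : D x -> 0 <= (f x)%:E by move=> Dx; rewrite lee_fin f0.
have fg_ge0 x : D x -> 0 <= (f x * g x)%:E by move=> Dx; rewrite lee_fin mulr_ge0 ?f0 ?g0.
have fg2_ge0 x : D x -> 0 <= (f x * g x ^+ 2)%:E.
  by move=> Dx; rewrite lee_fin mulr_ge0 ?exprn_ge0 ?f0 ?g0.
have mF : measurable_fun D (fun x => (f x)%:E) by exact/measurable_EFinP.
have mfg : measurable_fun D (fun x => (f x * g x)%:E) by exact/measurable_EFinP/measurable_funM.
have mfg2 : measurable_fun D (fun x => (f x * g x ^+ 2)%:E).
  by apply/measurable_EFinP/measurable_funM => //; exact: measurable_funX.
have a0 : (0 <= a)%R by rewrite -lee_fin -fga integral_ge0.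
have a2f_ge0 x : D x -> 0 <= (a ^+ 2)%:E * (f x)%:E.
  by move=> Dx; rewrite mule_ge0 ?f_ge0 ?lee_fin ?sqr_ge0.
(* integrate 2 a f g <= f g^2 + a^2 f, i.e. f (g - a)^2 >= 0 *)
have : \int[mu]_(x in D) ((2 * a)%:E * (f x * g x)%:E) <=
       \int[mu]_(x in D) ((f x * g x ^+ 2)%:E + (a ^+ 2)%:E * (f x)%:E).
  apply: ge0_le_integral => //.
  - by move=> x Dx; rewrite mule_ge0 ?fg_ge0 ?lee_fin ?mulr_ge0.
  - exact: measurable_funeM.
  - by apply: emeasurable_funD => //; exact: measurable_funeM.
  move=> x Dx; rewrite -!EFinM -EFinD lee_fin.
  have := mulr_ge0 (f0 Dx) (sqr_ge0 (g x - a)); nra.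
rewrite (ge0_integralD _ mD fg2_ge0 mfg2 a2f_ge0 (measurable_funeM _ mF)).
rewrite (ge0_integralZl_EFin _ mD fg_ge0 mfg (_ : 0 <= 2 * a)%R) ?mulr_ge0 //.
rewrite (ge0_integralZl_EFin _ mD f_ge0 mF (sqr_ge0 a)) fga f1 mule1 -EFinM.
have -> : (2 * a * a = a ^+ 2 + a ^+ 2)%R by ring.
by rewrite EFinD leeD2rE.
Qed.
End density_mixture.

Section cumulative_intensity.
Context {R : realType}.
Local Open Scope ereal_scope.
Variable psi : R -> R.
Hypothesis mpsi : measurable_fun (`[0%R, +oo[ : set R) psi.
Hypothesis psi0 : forall t, (0 <= t)%R -> (0 <= psi t)%R.
Hypothesis ipsi : forall t, (0 <= t)%R ->
  lebesgue_measure.-integrable `[0%R, t] (fun s => (psi s)%:E).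

Let Psi t := \int[lebesgue_measure]_(s in `[0%R, t]) (psi s)%:E.

Let Psi_ge0 t : 0 <= Psi t.
Proof. by apply: integral_ge0 => s; rewrite /= in_itv /= => /andP[s0 _]; rewrite lee_fin psi0. Qed.

Let Psi_le s t : (s <= t)%R -> Psi s <= Psi t.
Proof.
move=> st; apply: ge0_subset_integral => //.
- apply/measurable_EFinP; apply: measurable_funS mpsi => // x.
  by rewrite /= !in_itv /= => /andP[-> _].
- by move=> x; rewrite /= in_itv /= => /andP[x0 _]; rewrite lee_fin psi0.
- by move=> x; rewrite /= !in_itv /= => /andP[-> /le_trans->].
Qed.

Let Psi_fin t : Psi t \is a fin_num.
Proof.
have tmax : (t <= Num.max t 0%R)%R by rewrite le_max lexx.
have : Psi (Num.max t 0%R) \is a fin_num.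
  by apply: integrable_fin_num; rewrite // ipsi // le_max lexx orbT.
rewrite !ge0_fin_numE //; exact/le_lt_trans/Psi_le.
Qed.

Lemma cumint_ge0 t : (0 <= cumint psi t)%R.
Proof. exact: fine_ge0 (Psi_ge0 t). Qed.

Lemma cumint_nondecreasing : {homo cumint psi : s t / (s <= t)%R}.
Proof. by move=> s t st; apply: fine_le; rewrite ?Psi_fin ?Psi_le. Qed.

Lemma measurable_cumint (D : set R) : measurable D -> measurable_fun D (cumint psi).
Proof. by move=> mD; apply: nondecreasing_measurable mD cumint_nondecreasing. Qed.
End cumulative_intensity.

Section measurable_compound_poisson.
Context d (T : measurableType d) (R : realType).
Variables (D : set T) (L : T -> R).
Hypothesis mL : measurable_fun D L.

Lemma measurable_poisw n : measurable_fun D (fun x => poisw (L x) n).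
Proof.
apply/measurable_funM/measurable_cst/measurable_funM; last exact: measurable_funX.
exact/measurableT_comp/measurableT_comp/mL.
Qed.

Lemma measurable_compound_poisson (q : nat -> R) k :
  (forall k, (0 <= q k)%R) -> (forall x, D x -> (0 <= L x)%R) ->
  measurable_fun D (fun x => compound_poisson q (L x) k).
Proof.
move=> q0 L0; apply: (@ge0_emeasurable_sum _ _ _ D
  (fun n x => (poisw (L x) n * convn q n k)%:E) xpredT).
- by move=> n x Dx _; rewrite lee_fin mulr_ge0 ?poisw_ge0 ?convn_ge0 ?L0.
- by move=> n _; apply/measurable_EFinP/measurable_funM/measurable_cst; exact: measurable_poisw.
Qed.
End measurable_compound_poisson.

Lemma fin_num_pmul (R : realType) (c : R) (x : \bar R) :
  (0 < c)%R -> (0 <= x)%E -> (c%:E * x)%E \is a fin_num -> x \is a fin_num.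
Proof. by move=> c0; case: x => // _; rewrite mulry gtr0_sg // mul1e. Qed.

Lemma moment_ratio_le (R : realFieldType) (m1 m2 a b : R) :
  0 < m1 -> 0 < a -> a ^+ 2 <= b ->
  m1 * a + m2 / m1 <= (m2 * a + m1 ^+ 2 * b) / (m1 * a).
Proof.
move=> m1_gt0 a_gt0 a2b; rewrite ler_pdivlMr ?mulr_gt0 //.
have -> : (m1 * a + m2 / m1) * (m1 * a) = m2 * a + m1 ^+ 2 * a ^+ 2.
  by field; rewrite gt_eqF.
by rewrite lerD2l ler_wpM2l ?sqr_ge0.
Qed.

Section three_level_moments.
Context {R : realType}.
Local Open Scope ereal_scope.
Variables (px : nat -> R) (m1 m2 : R) (psi fAt : R -> R).
Hypothesis px0 : forall k, (0 <= px k)%R.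
Hypothesis px_mass : pmom 0 px = 1.
Hypothesis px_mom1 : pmom 1 px = m1%:E.
Hypothesis px_mom2 : pmom 2 px = m2%:E.
Hypothesis mpsi : measurable_fun (`[0%R, +oo[ : set R) psi.
Hypothesis psi0 : forall t, (0 <= t)%R -> (0 <= psi t)%R.
Hypothesis ipsi : forall t, (0 <= t)%R ->
  lebesgue_measure.-integrable `[0%R, t] (fun s => (psi s)%:E).
Hypothesis mfAt : measurable_fun (`[0%R, +oo[ : set R) fAt.
Hypothesis fAt0 : forall a, (0 <= a)%R -> (0 <= fAt a)%R.
Hypothesis fAt1 : \int[lebesgue_measure]_(a in `[0%R, +oo[) (fAt a)%:E = 1.

Local Notation D := (`[0%R, +oo[%classic : set R).
Let L := cumint psi.
Let mD : measurable D. Proof. exact: measurable_itv. Qed.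
Let mL : measurable_fun D L. Proof. exact: measurable_cumint. Qed.
Let L0 a : (0 <= L a)%R. Proof. exact: cumint_ge0. Qed.
Let fAt0D a : D a -> (0 <= fAt a)%R.
Proof. by rewrite /D /= in_itv /= andbT; exact: fAt0. Qed.
Let fL_ge0 a : D a -> 0 <= (fAt a * L a)%:E.
Proof. by move=> Da; rewrite lee_fin mulr_ge0 ?fAt0D. Qed.
Let fL2_ge0 a : D a -> 0 <= (fAt a * L a ^+ 2)%:E.
Proof. by move=> Da; rewrite lee_fin mulr_ge0 ?fAt0D ?exprn_ge0. Qed.
Let mfL : measurable_fun D (fun a => (fAt a * L a)%:E).
Proof. exact/measurable_EFinP/measurable_funM. Qed.
Let mfL2 : measurable_fun D (fun a => (fAt a * L a ^+ 2)%:E).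
Proof. by apply/measurable_EFinP/measurable_funM => //; exact: measurable_funX. Qed.
Let m1_ge0 : (0 <= m1)%R. Proof. by rewrite -lee_fin -px_mom1 pmom_ge0. Qed.
Let m2_ge0 : (0 <= m2)%R. Proof. by rewrite -lee_fin -px_mom2 pmom_ge0. Qed.

(* lawY px psi a is convertible to compound_poisson px (L a) *)
Let lawYt_wmom (w : nat -> R) (F : R -> R) : (forall k, 0 <= w k)%R ->
  (forall a, \sum_(k <oo) (w k)%:E * lawY px psi a k = (F a)%:E) ->
  \sum_(k <oo) (w k)%:E * lawYt px psi fAt k =
  \int[lebesgue_measure]_(a in D) (fAt a * F a)%:E.
Proof.
move=> w0 wF.
have lawY_ge0 a k : D a -> 0 <= lawY px psi a k.
  by move=> _; exact: compound_poisson_ge0.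
have mlawY k : measurable_fun D (fun a => lawY px psi a k).
  exact: measurable_compound_poisson.
rewrite (nneseries_mixture lebesgue_measure mD mfAt fAt0D lawY_ge0 mlawY w0).
by apply: eq_integral => a _; rewrite wF -EFinM.
Qed.

Lemma mom1_lawYt :
  mom1 (lawYt px psi fAt) = m1%:E * \int[lebesgue_measure]_(a in D) (fAt a * L a)%:E.
Proof.
rewrite /mom1 (lawYt_wmom (F := fun a => (m1 * L a)%R)) // => [|a].
  rewrite -(ge0_integralZl_EFin lebesgue_measure mD fL_ge0 mfL m1_ge0).
  by apply: eq_integral => a _; rewrite -EFinM mulrCA.
exact: (mom1_compound_poisson px0 px_mass px_mom1 px_mom2 (L0 a)).
Qed.

Lemma mom2_lawYt :
  mom2 (lawYt px psi fAt) =
  m2%:E * \int[lebesgue_measure]_(a in D) (fAt a * L a)%:E +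
  (m1 ^+ 2)%:E * \int[lebesgue_measure]_(a in D) (fAt a * L a ^+ 2)%:E.
Proof.
rewrite /mom2 (lawYt_wmom (F := fun a => (m2 * L a + m1 ^+ 2 * L a ^+ 2)%R))
  => [|k|a]; last 2 first.
- exact: sqr_ge0.
- exact: (mom2_compound_poisson px0 px_mass px_mom1 px_mom2 (L0 a)).
have m2fL_ge0 a : D a -> 0 <= m2%:E * (fAt a * L a)%:E.
  by move=> Da; rewrite -EFinM lee_fin !mulr_ge0 ?m2_ge0 ?fAt0D ?L0.
have m1fL2_ge0 a : D a -> 0 <= (m1 ^+ 2)%:E * (fAt a * L a ^+ 2)%:E.
  by move=> Da; rewrite -EFinM lee_fin !mulr_ge0 ?sqr_ge0 ?fAt0D ?L0.
rewrite -(ge0_integralZl_EFin lebesgue_measure mD fL_ge0 mfL m2_ge0).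
rewrite -(ge0_integralZl_EFin lebesgue_measure mD fL2_ge0 mfL2 (sqr_ge0 m1)).
rewrite -(ge0_integralD lebesgue_measure mD m2fL_ge0 (measurable_funeM _ mfL)
                                             m1fL2_ge0 (measurable_funeM _ mfL2)).
by apply: eq_integral => a _; rewrite -!EFinM -EFinD; congr EFin; ring.
Qed.

Lemma lawYt_moment_ratio : (0 < m1)%R ->
  mom1 (lawYt px psi fAt) \is a fin_num -> mom2 (lawYt px psi fAt) \is a fin_num ->
  0 < mom1 (lawYt px psi fAt) ->
  (fine (mom1 (lawYt px psi fAt)) + m2 / m1 <=
   fine (mom2 (lawYt px psi fAt)) / fine (mom1 (lawYt px psi fAt)))%R.
Proof.
rewrite mom1_lawYt mom2_lawYt.
set A := \int[_]_(_ in _) (fAt _ * _)%:E; set B := \int[_]_(_ in _) _.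
move=> m1_gt0 EY_fin EY2_fin EY_gt0.
have A_ge0 : 0 <= A by exact: integral_ge0.
have A_fin : A \is a fin_num by exact: fin_num_pmul EY_fin.
have B_fin : B \is a fin_num.
  move: EY2_fin; rewrite fin_numD => /andP[_].
  by apply: fin_num_pmul; [rewrite exprn_gt0 | exact: integral_ge0].
have jensen : (fine A ^+ 2)%:E <= B.
  apply: (sqr_integral_le (mu := lebesgue_measure) mD mfAt fAt0D mL (fun a _ => L0 a) fAt1).
  by rewrite fineK.
move: EY_gt0 jensen; rewrite -(fineK A_fin) -(fineK B_fin).
rewrite -!EFinM -EFinD /= !lte_fin !lee_fin pmulr_rgt0 // => a_gt0 a2b.
exact: moment_ratio_le.
Qed.
End three_level_moments.

Theorem mainTheorem6 (R : realType) (px : nat -> R) (psi fAt : R -> R) :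
  (* law of Xtilde (burden of a consumed prey, independent of t) *)
  is_pmf px ->
  (* intensity psi of consumption times: nonnegative, locally integrable *)
  measurable_fun (`[0, +oo[ : set R) psi ->
  (forall t, 0 <= t -> 0 <= psi t) ->
  (forall t, 0 <= t ->
     lebesgue_measure.-integrable `[0%R, t] (fun s => (psi s)%:E)) ->
  (* density of the age Atilde of a first predator consumed by the second *)
  measurable_fun (`[0, +oo[ : set R) fAt ->
  (forall a, 0 <= a -> 0 <= fAt a) ->
  (\int[lebesgue_measure]_(a in `[0%R, +oo[) (fAt a)%:E = 1)%E ->
  (* moments finite, expectations positive *)
  let EX := mom1 (fun k => (px k)%:E) in
  let EX2 := mom2 (fun k => (px k)%:E) in
  let EY := mom1 (lawYt px psi fAt) in
  let EY2 := mom2 (lawYt px psi fAt) in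
  EX \is a fin_num -> EX2 \is a fin_num -> (0 < EX)%E ->
  EY \is a fin_num -> EY2 \is a fin_num -> (0 < EY)%E ->
  fine EY2 / fine EY >= fine EY + fine EX2 / fine EX.
Proof.
move=> [px0 px_sum1] mpsi psi0 ipsi mfAt fAt0 fAt1 EX EX2 EY EY2 EX_fin EX2_fin EX_gt0.
have px_mass : (pmom 0 px = 1)%E by rewrite pmom0E.
have px_mom1 : pmom 1 px = (fine EX)%:E by rewrite fineK // -mom1_EFin.
have px_mom2 : pmom 2 px = (fine EX2)%:E by rewrite fineK // -mom2_EFin.
have m1_gt0 : 0 < fine EX by rewrite -lte_fin fineK.
exact: (lawYt_moment_ratio px0 px_mass px_mom1 px_mom2 mpsi psi0 ipsi mfAt fAt0 fAt1 m1_gt0).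
Qed.
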